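(* Let $m,n$ be positive integers. Then $$\binom{3m}{3n}\equiv\binom{m}{n}(1+9mn^2-9m^2n)\pmod{27}.$$ *)

From mathcomp Require Import all_boot all_order all_algebra.

(** Since (1 + X)^3 = A + 3Q with A = 1 + X^3 and Q = X + X^2, the binomial
    theorem gives, modulo 27,
      (1 + X)^(3m) = A^m + 3m A^(m-1) Q + 9 C(m,2) A^(m-2) Q^2.
    Only multiples of X^3 occur in A, so at X^(3n) the middle term contributes
    nothing and, as Q^2 = X^2 + 2X^3 + X^4, the last one contributes
    18 C(m,2) C(m-2,n-1).  The identity n (m-n) C(m,n) = m (m-1) C(m-2,n-1)
    turns the claimed congruence into 27 | 9 (m+1) m (m-1) C(m-2,n-1), which
    holds because 3 divides a product of three consecutive integers. *)

From mathcomp Require Import all_boot all_order all_algebra.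
From mathcomp Require Import ring.
Import GRing.Theory.
Local Open Scope ring_scope.
Set Implicit Arguments.
Unset Strict Implicit.
Unset Printing Implicit Defensive.

Lemma exprDn_upto_cube (R : comNzRingType) (a c : R) (n : nat) :
  exists s : R, (a + c) ^+ n = a ^+ n + (a ^+ n.-1 * c) *+ n
                  + (a ^+ n.-2 * c ^+ 2) *+ 'C(n, 2) + c ^+ 3 * s.
Proof.
case: n => [|[|n]].
- by exists 0; rewrite mulr0 !mulr0n !addr0.
- by exists 0; rewrite mulr0 mulr0n !addr0 expr0 mul1r.
exists (\sum_(i < n) (a ^+ (n - i.+1) * c ^+ i) *+ 'C(n.+2, i.+3)).
rewrite exprDn !big_ord_recl /= mulr_sumr subn0 subn1 subn2 expr0 expr1 mulr1.
rewrite bin0 bin1 mulr1n !addrA; congr (_ + _); apply: eq_bigr => i _.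
by rewrite /bump !add1n !subSS mulrnAr [in RHS]mulrCA -exprD add3n.
Qed.

Lemma coef_exp_Xadd1 (R : nzRingType) (k j : nat) :
  (('X + 1 : {poly R}) ^+ k)`_j = 'C(k, j)%:R.
Proof.
elim: k j => [|k IHk] [|j]; rewrite ?expr0 ?coef1 // exprS mulrDl mul1r coefD coefXM.
- by rewrite /= IHk add0r !bin0.
- by rewrite IHk /= IHk binS natrD addrC.
Qed.

Lemma coef_comp_Xn_mulXn (R : nzRingType) (p : {poly R}) (d e i : nat) :
  (0 < d)%N -> ((p \Po 'X^d) * 'X^e)`_(d * i + e) = p`_i.
Proof.
move=> d_gt0; rewrite coefMXn ltnNge leq_addl addnK.
by rewrite coef_comp_poly_Xn // dvdn_mulr // mulKn.
Qed.

Lemma coef_comp_Xn_mulXn_eq0 (R : nzRingType) (p : {poly R}) (d e i : nat) :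
  (0 < d)%N -> i != e %[mod d] -> ((p \Po 'X^d) * 'X^e)`_i = 0.
Proof.
move=> d_gt0 ie; rewrite coefMXn; case: ltnP => // ei.
by rewrite coef_comp_poly_Xn // -eqn_mod_dvd // (negbTE ie).
Qed.

Lemma binomial_mul3_mod27 (m n : nat) :
  (('C(3 * m, 3 * n.+1))%:Z
     = ('C(m, n.+1))%:Z + 18 * ('C(m, 2) * 'C(m.-2, n))%N %[mod 27])%Z.
Proof.
pose A : {poly int} := ('X + 1) \Po 'X^3.
pose Q : {poly int} := 'X + 'X^2.
have Xadd1_cube : ('X + 1) ^+ 3 = A + Q *+ 3.
  by rewrite /A /Q comp_polyD comp_polyX comp_polyC; ring.
have powA j : A ^+ j = (('X + 1) ^+ j) \Po 'X^3 by rewrite rmorphXn.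
have [s expansion] := exprDn_upto_cube A (Q *+ 3) m.
have mul3_mod3 k e : (3 * k != e %[mod 3])%N = (e %% 3 != 0)%N.
  by rewrite modnMr eq_sym.
have coef_main : (A ^+ m)`_(3 * n.+1) = 'C(m, n.+1)%:R.
  by rewrite powA coef_comp_poly_Xn // dvdn_mulr // mulKn // coef_exp_Xadd1.
have coef_linear : (A ^+ m.-1 * (Q *+ 3))`_(3 * n.+1) = 0.
  rewrite mulrnAr /Q mulrDr -{1}(expr1 'X) coefMn coefD !powA.
  by rewrite !coef_comp_Xn_mulXn_eq0 ?mul3_mod3 ?addr0 ?mul0rn.
have coef_quadratic :
    (A ^+ m.-2 * (Q *+ 3) ^+ 2)`_(3 * n.+1) = 'C(m.-2, n)%:R *+ 18.
  have -> : A ^+ m.-2 * (Q *+ 3) ^+ 2 =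
      (A ^+ m.-2 * 'X^2 + (A ^+ m.-2 * 'X^3) *+ 2 + A ^+ m.-2 * 'X^4) *+ 9.
    by rewrite /Q; ring.
  have coef_X3 : ((('X + 1 : {poly int}) ^+ m.-2 \Po 'X^3) * 'X^3)`_(3 * n.+1)
                 = 'C(m.-2, n)%:R.
    by rewrite mulnSr coef_comp_Xn_mulXn // coef_exp_Xadd1.
  rewrite coefMn !coefD !powA coef_X3 !coef_comp_Xn_mulXn_eq0 ?mul3_mod3 //.
  by rewrite add0r addr0 -mulr2n -mulrnA.
have cubic : (Q *+ 3) ^+ 3 * s = (Q ^+ 3 * s) *+ 27 by ring.
rewrite -natz -coef_exp_Xadd1 exprM Xadd1_cube expansion !coefD !coefMn.
rewrite coef_main coef_linear coef_quadratic cubic coefMn mul0rn addr0.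
apply/eqP; rewrite eqz_mod_dvd; apply/dvdzP; exists (Q ^+ 3 * s)`_(3 * n.+1).
by rewrite PoszM -!natz; ring.
Qed.

Lemma mul_bin2 (m : nat) : (2 * 'C(m, 2) = m * m.-1)%N.
Proof. by rewrite mulnC bin_ffact ffactnS ffactn1. Qed.

Lemma mul_bin_sub (m n : nat) :
  'C(m, n.+1)%:Z * n.+1%:Z * (m%:Z - n.+1%:Z) = m%:Z * m.-1%:Z * 'C(m.-2, n)%:Z.
Proof.
have nat_identity : ('C(m, n.+1) * n.+1 * (m - n.+1) = m * m.-1 * 'C(m.-2, n))%N.
  rewrite [(_ * n.+1)%N]mulnC -mul_bin_diag subnS predn_sub -mulnA.
  by rewrite [(_ * (_ - _))%N]mulnC -mul_bin_down mulnA.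
rewrite -!PoszM -nat_identity.
case: (leqP n.+1 m) => [le_nm | lt_mn]; first by rewrite subzn // -PoszM.
by rewrite bin_small // !mul0r.
Qed.

Lemma dvdn_fact_ffact (n k : nat) : (k`! %| n ^_ k)%N.
Proof. by rewrite -bin_ffact dvdn_mull. Qed.

Lemma dvdn3_mul_consecutive (m : nat) : (3 %| m.+1 * m * m.-1)%N.
Proof.
apply: (@dvdn_trans 3`!) => //.
by have := dvdn_fact_ffact m.+1 3; rewrite !ffactnS ffactn0 muln1 mulnA.
Qed.

Theorem lemma2p9 (m n : nat) (hm : (0 < m)%N) (hn : (0 < n)%N) :
  (('C(3 * m, 3 * n))%:Z
     = ('C(m, n))%:Z * (1 + 9 * m%:Z * n%:Z ^+ 2 - 9 * m%:Z ^+ 2 * n%:Z)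
     %[mod 27])%Z.
Proof.
case: n hn => // n _.
rewrite binomial_mul3_mod27; apply/eqP; rewrite eqz_mod_dvd.
set M := m%:Z; set N := n.+1%:Z; set C := 'C(m, n.+1)%:Z.
have -> : C + 18 * ('C(m, 2) * 'C(m.-2, n))%N - C * (1 + 9 * M * N ^+ 2 - 9 * M ^+ 2 * N)
    = 9 * ((2 * 'C(m, 2))%N%:Z * 'C(m.-2, n)%:Z + M * (C * N * (M - N))).
  by rewrite !PoszM; ring.
rewrite mul_bin2 mul_bin_sub.
have [q consecutiveE] := dvdnP (dvdn3_mul_consecutive m).
apply/dvdzP; exists (q%:Z * 'C(m.-2, n)%:Z).
transitivity (9 * (m.+1 * m * m.-1)%N%:Z * 'C(m.-2, n)%:Z).
  by rewrite -[m.+1]addn1 !PoszM PoszD; ring.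
by rewrite consecutiveE PoszM; ring.
Qed.
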